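(* Let $\mathcal E$ be a finite set, $\mathcal D=2^{S}$ for a finite set $S$, and let $f_1,f_2:\mathcal E^*\to\mathcal D$ be linear mappings. Then the mappings $f_1\cap f_2$, $f_1=_?f_2$ and $f_1\subseteq_?f_2$ are linear.
   Context: $\mathcal E^*=\bigcup_{n\ge1}\mathcal E^n$ is the set of profiles; $\mathrm{Hist}(P)\in\mathbb Z_{\ge0}^{\mathcal E}$ counts occurrences of each element of $\mathcal E$ in $P$. A mapping $f:\mathcal E^*\to\mathcal D$ is linear if there exist $\vec h_1,\dots,\vec h_K\in\mathbb R^{|\mathcal E|}$ and $g:\{+,-,0\}^K\to\mathcal D$ such that $f(P)=g(\sigma_1,\dots,\sigma_K)$ where $\sigma_t$ is the sign ($+,-,0$) of $\mathrm{Hist}(P)\cdot\vec h_t$. Operations: $(f_1\cap f_2)(P)=f_1(P)\cap f_2(P)$; $(f_1=_?f_2)(P)=f_1(P)$ if $f_1(P)=f_2(P)$ and $\emptyset$ otherwise; $(f_1\subseteq_?f_2)(P)=f_1(P)$ if $f_1(P)\subseteq f_2(P)$ and $\emptyset$ otherwise. *)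

From mathcomp Require Import all_boot.
From Stdlib Require Import Reals.
Set Implicit Arguments. Unset Strict Implicit. Unset Printing Implicit Defensive.

Inductive sgn := SPos | SNeg | SZero.

Definition sign_of (x : R) : sgn :=
  match Rlt_dec 0 x with
  | left _ => SPos
  | right _ => match Rlt_dec x 0 with left _ => SNeg | right _ => SZero end
  end.

Definition profile (E : finType) (P : seq E) : Prop := (0 < size P)%N.

Definition Hist (E : finType) (P : seq E) (e : E) : nat := count_mem e P.

Definition hdot (E : finType) (P : seq E) (h : E -> R) : R :=
  \big[Rplus/0%R]_(e : E) (INR (Hist P e) * h e)%R.

Definition linear_map (E : finType) (D : Type) (f : seq E -> D) : Prop :=
  exists (K : nat) (h : 'I_K -> E -> R) (g : ('I_K -> sgn) -> D),
    forall P : seq E, profile P -> f P = g (fun t => sign_of (hdot P (h t))).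

Definition map_cap (E S : finType) (f1 f2 : seq E -> {set S}) : seq E -> {set S} :=
  fun P => f1 P :&: f2 P.

Definition map_eq (E S : finType) (f1 f2 : seq E -> {set S}) : seq E -> {set S} :=
  fun P => if f1 P == f2 P then f1 P else set0.

Definition map_sub (E S : finType) (f1 f2 : seq E -> {set S}) : seq E -> {set S} :=
  fun P => if f1 P \subset f2 P then f1 P else set0.

From mathcomp Require Import all_boot.
From Stdlib Require Import Reals.
From Stdlib Require Import FunctionalExtensionality.

(* Concatenating the test vectors of two linear maps gives a family of sign
   tests from which both maps, and hence any pointwise combination of them,
   can be read off. *)

Lemma linear_map2 {E : finType} {D1 D2 D : Type} (op : D1 -> D2 -> D)
    {f1 : seq E -> D1} {f2 : seq E -> D2} :
  linear_map f1 -> linear_map f2 -> linear_map (fun P => op (f1 P) (f2 P)).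
Proof.
move=> [K1 [h1 [g1 Hf1]]] [K2 [h2 [g2 Hf2]]].
pose h (t : 'I_(K1 + K2)) := match fintype.split t with inl i => h1 i | inr j => h2 j end.
have h_lshift i : h (lshift K2 i) = h1 i by rewrite /h (unsplitK (inl _)).
have h_rshift j : h (@rshift K1 K2 j) = h2 j by rewrite /h (unsplitK (inr _)).
exists (K1 + K2)%N, h, (fun s => op (g1 (s \o lshift K2)) (g2 (s \o @rshift K1 K2))).
move=> P HP; rewrite Hf1 // Hf2 //.
by congr op; [congr g1 | congr g2]; apply: functional_extensionality => i;
  rewrite /= ?h_lshift ?h_rshift.
Qed.

Theorem theorem5 (E S : finType) (f1 f2 : seq E -> {set S}) :
  linear_map f1 -> linear_map f2 ->
  linear_map (map_cap f1 f2) /\ linear_map (map_eq f1 f2) /\ linear_map (map_sub f1 f2).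
Proof.
move=> lin1 lin2; split; [|split].
- exact (linear_map2 (fun A B : {set S} => A :&: B) lin1 lin2).
- exact (linear_map2 (fun A B : {set S} => if A == B then A else set0) lin1 lin2).
- exact (linear_map2 (fun A B : {set S} => if A \subset B then A else set0) lin1 lin2).
Qed.
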